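(* Let $\kappa$ be an infinite cardinal and let $(\mathbf{Z}_\kappa,\Sigma)$ be a ring of Euclidean integers for $\kappa$. Then there exist a fine ultrafilter $\mathcal{U}$ on $\kappa$ and an isomorphism of ordered rings $\sigma:\mathbf{Z}_\kappa\to\mathbb{Z}^\kappa/\mathcal{U}$ (the ultrapower of $\mathbb{Z}$ modulo $\mathcal{U}$) such that $\sigma(\Sigma(\mathbf{x}))=[\mathbf{f}_{\mathbf{x}}]_{\mathcal{U}}$ for every $\mathbf{x}\in\mathbb{Z}^\kappa$, where $[\cdot]_{\mathcal U}$ denotes the class modulo $\mathcal U$. Equivalently, $\Sigma(\mathbf{x})\le\Sigma(\mathbf{y})$ iff $\{\delta<\kappa\mid \mathbf{f}_{\mathbf{x}}(\delta)\le\mathbf{f}_{\mathbf{y}}(\delta)\}\in\mathcal{U}$.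
   Context: Every ordinal $\alpha$ has a unique base-2 normal form $\alpha=2^{\alpha_1}+\dots+2^{\alpha_n}$ with $\alpha_1>\dots>\alpha_n$; put $L_\alpha=\{\alpha_1,\dots,\alpha_n\}$. Formal inclusion: $\alpha\sqsubseteq\beta$ iff $L_\alpha\subseteq L_\beta$, $\alpha\sqsubset\beta$ iff $L_\alpha\subsetneq L_\beta$. $\alpha\vee\beta$ is the ordinal $\gamma$ with $L_\gamma=L_\alpha\cup L_\beta$. For $\theta<\kappa$ the cone is $C(\theta)=\{\alpha<\kappa\mid\theta\sqsubset\alpha\}$; a filter on $\kappa$ is fine if it contains all cones. For $\mathbf{x}\in\mathbb{Z}^\kappa$, $\mathbf{f}_{\mathbf{x}}(\alpha)=\sum_{\beta\sqsubseteq\alpha}x_\beta$. A ring of Euclidean integers for $\kappa$ is a discretely ordered commutative integral domain $\mathbf{Z}_\kappa$ containing $\mathbb{Z}$ as an ordered subring, together with a map $\Sigma:\mathbb{Z}^\kappa\to\mathbf{Z}_\kappa$, written $\Sigma(\mathbf{x})=\sum_\alpha x_\alpha$, such that: (0) if only finitely many $x_\alpha\neq0$ then $\sum_\alpha x_\alpha$ is the ordinary finite sum; (RA) every element of $\mathbf{Z}_\kappa$ is $\sum_\alpha x_\alpha$ for some $\mathbf{x}\in\mathbb{Z}^\kappa$; (LA) $u\sum_\alpha x_\alpha+v\sum_\alpha y_\alpha=\sum_\alpha(ux_\alpha+vy_\alpha)$ for all $u,v\in\mathbb{Z}$, $\mathbf{x},\mathbf{y}\in\mathbb{Z}^\kappa$;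 (CA) if there is $\theta<\kappa$ with $\mathbf{f}_{\mathbf{x}}(\delta)\le\mathbf{f}_{\mathbf{y}}(\delta)$ for all $\delta<\kappa$ with $\theta\sqsubseteq\delta$, then $\sum_\alpha x_\alpha\le\sum_\alpha y_\alpha$; (PA) $(\sum_\alpha x_\alpha)(\sum_\beta y_\beta)=\sum_\gamma z_\gamma$ where $z_\gamma=\sum_{\alpha\vee\beta=\gamma}x_\alpha y_\beta$. *)

From HB Require Import structures.
From mathcomp Require Import all_boot all_order all_algebra.
From mathcomp Require Export finmap.
Set Implicit Arguments. Unset Strict Implicit. Unset Printing Implicit Defensive.
Import Order.TTheory GRing.Theory Num.Theory.
Local Open Scope ring_scope.

(* Ordinals alpha < kappa are represented by their base-2 exponent sets
   L_alpha, which are exactly the finite subsets of kappa.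
   K is the underlying set of kappa; the index type is {fset K}. *)

Section Euclid.
Variable K : choiceType.
Notation I := {fset K}.

Definition fsqsub (a b : I) : bool := (a `<=` b)%fset && (a != b).
Definition cone (theta : I) : I -> Prop := fun a => fsqsub theta a.

Definition fx (x : I -> int) (a : I) : int := \sum_(b <- fpowerset a) x b.

(* z_gamma = sum_{alpha \/ beta = gamma} x_alpha y_beta (finite: alpha,beta <= gamma) *)
Definition prodseq (x y : I -> int) (g : I) : int :=
  \sum_(a <- fpowerset g) \sum_(b <- fpowerset g | (a `|` b)%fset == g) x a * y b.

Definition is_ultrafilter (T : Type) (U : (T -> Prop) -> Prop) : Prop :=
  [/\ U (fun _ => True),
      ~ U (fun _ => False),
      (forall A B : T -> Prop, U A -> U B -> U (fun t => A t /\ B t)),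
      (forall A B : T -> Prop, (forall t, A t -> B t) -> U A -> U B) &
      (forall A : T -> Prop, U A \/ U (fun t => ~ A t))].

Definition fine (U : (I -> Prop) -> Prop) : Prop := forall theta, U (cone theta).

(* A ring of Euclidean integers for kappa on the discretely ordered
   commutative integral domain R (Z embedded by z |-> z%:~R). *)
Definition discretely_ordered (R : realDomainType) : Prop :=
  forall r : R, 0 < r -> 1 <= r.

Definition euclidean_sum (R : realDomainType) (S : (I -> int) -> R) : Prop :=
  [/\ (forall (x : I -> int) (s : seq I), uniq s ->
          (forall a, a \notin s -> x a = 0%R) -> S x = \sum_(a <- s) (x a)%:~R),
      (forall r : R, exists x, S x = r),
      (forall (u v : int) (x y : I -> int),
          u%:~R * S x + v%:~R * S y = S (fun a => u * x a + v * y a)),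
      (forall x y : I -> int,
          (exists theta : I, forall d : I, (theta `<=` d)%fset -> fx x d <= fx y d) ->
          S x <= S y) &
      (forall x y : I -> int, S x * S y = S (prodseq x y))].

(* Ultrapower Z^I/U, described through representatives:
   two functions are identified / compared when they agree / compare on a U-set. *)
Definition ueq (U : (I -> Prop) -> Prop) (f g : I -> int) : Prop := U (fun d => f d = g d).
Definition ule (U : (I -> Prop) -> Prop) (f g : I -> int) : Prop := U (fun d => f d <= g d).

(* sigma : R -> Z^I/U given by a choice of representative sigma r : I -> int;
   it is an isomorphism of ordered rings onto the ultrapower. *)
Definition ordered_ring_iso_ultrapower (R : realDomainType)
    (U : (I -> Prop) -> Prop) (sigma : R -> I -> int) : Prop :=
  [/\ (forall r s, ueq U (sigma (r + s)) (fun d => sigma r d + sigma s d)),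
      (forall r s, ueq U (sigma (r * s)) (fun d => sigma r d * sigma s d)),
      ueq U (sigma 1) (fun _ => 1),
      (forall r s, ueq U (sigma r) (sigma s) -> r = s) /\
      (forall g : I -> int, exists r, ueq U (sigma r) g) &
      (forall r s, r <= s <-> ule U (sigma r) (sigma s))].
End Euclid.

From mathcomp Require Import all_boot all_order all_algebra finmap.
From Stdlib Require Import ClassicalEpsilon.
Set Implicit Arguments. Unset Strict Implicit. Unset Printing Implicit Defensive.
Import Order.TTheory GRing.Theory Num.Theory.
Local Open Scope ring_scope.

(* The map x |-> f_x is a bijection of Z^I onto itself (Moebius inversion on
   finite sets) which turns the convolution of (PA) into the pointwise product.
   Hence Sigma induces a map Sf on Z^I, Sf (f_x) = Sigma x, that is an onto,
   additive, multiplicative map which is monotone on the filter of cones.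
   Sending each indicator function to 0 or 1 (its image is idempotent), Sf
   defines an ultrafilter U = {A | Sf 1_A = 1}, fine by monotonicity, and
   Sf (1_A * g) = Sf g for A in U shows that Sf g depends only on the class of
   g modulo U; comparing g and g + 1 on U-sets identifies the orders. *)

Section MoebiusInversion.
Variable K : choiceType.
Notation I := {fset K}.

Lemma card_fpowerset_proper {a b : I} :
  b \in fpowerset a -> b != a -> (#|` b| < #|` a|)%N.
Proof.
by rewrite fpowersetE => sba nba; apply: fproper_ltn_card; rewrite fproperEneq nba.
Qed.

(* Fuel-driven recursion on the cardinality of the index set: with fuel at
   least #|a| the value at a no longer changes. *)
Fixpoint moebius_iter (g : I -> int) (n : nat) (a : I) : int :=
  if n is n'.+1 then g a - \sum_(b <- fpowerset a | b != a) moebius_iter g n' b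
  else g a.

Lemma moebius_iterS_stable g n a :
  (#|` a| <= n)%N -> moebius_iter g n.+1 a = moebius_iter g n a.
Proof.
elim: n a => [|n IH] a ha.
  rewrite /= big1_seq ?subr0 // => b /andP[nba bin].
  by have := card_fpowerset_proper bin nba; rewrite ltnNge (leq_trans ha).
rewrite [LHS]/= [RHS]/=; congr (_ - _).
rewrite big_seq_cond [RHS]big_seq_cond; apply: eq_bigr => b /andP[bin nba].
by apply: IH; rewrite -ltnS (leq_trans (card_fpowerset_proper bin nba)).
Qed.

Lemma moebius_iter_stable g n m a :
  (#|` a| <= n)%N -> (n <= m)%N -> moebius_iter g m a = moebius_iter g n a.
Proof.
move=> ha /subnKC <-; elim: (m - n)%N => [|k IH]; first by rewrite addn0.
by rewrite addnS moebius_iterS_stable ?IH // (leq_trans ha) ?leq_addr.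
Qed.

Definition moebius (g : I -> int) (a : I) : int := moebius_iter g #|` a| a.

Lemma fx_moebius g a : fx (moebius g) a = g a.
Proof.
have E b : b \in fpowerset a -> moebius g b = moebius_iter g #|` a| b.
  rewrite fpowersetE => /fsubset_leq_card h.
  by rewrite /moebius (moebius_iter_stable g (leqnn _) h).
rewrite /fx big_seq (eq_bigr _ E) -big_seq.
rewrite (bigD1_seq a) ?fset_uniq ?fpowersetE ?fsubset_refl //=.
by rewrite /moebius -moebius_iterS_stable //= subrK.
Qed.

Lemma sum_fpowerset_sub (F : I -> int) {a g : I} : (g `<=` a)%fset ->
  \sum_(c <- fpowerset g) F c = \sum_(c <- fpowerset a | (c `<=` g)%fset) F c.
Proof.
move=> ga; rewrite -[RHS]big_filter; apply: perm_big; apply: uniq_perm.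
- exact: fset_uniq.
- by rewrite filter_uniq // fset_uniq.
move=> c; rewrite mem_filter !fpowersetE.
by apply/idP/andP => [h|[]//]; split=> //; apply: fsubset_trans ga.
Qed.

Lemma fxM (x y : I -> int) a : fx (prodseq x y) a = fx x a * fx y a.
Proof.
have prodseq_sub g : g \in fpowerset a ->
    prodseq x y g = \sum_(c <- fpowerset a) \sum_(d <- fpowerset a)
       (if (c `|` d)%fset == g then x c * y d else 0).
  rewrite fpowersetE => ga.
  rewrite /prodseq (sum_fpowerset_sub _ ga) big_mkcond; apply: eq_bigr => c _.
  rewrite big_mkcond /= (sum_fpowerset_sub _ ga) big_mkcond.
  case: ifP => cg.
    apply: eq_bigr => d _; case: ifP => // dg; case: ifP => // /eqP E.
    by move: dg; rewrite -E fsubsetUr.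
  rewrite big1 // => d _; case: ifP => // /eqP E.
  by move: cg; rewrite -E fsubsetUl.
rewrite /fx big_seq (eq_bigr _ prodseq_sub) -big_seq exchange_big.
rewrite big_distrl; apply: eq_big_seq => c cin /=.
rewrite exchange_big big_distrr; apply: eq_big_seq => d din /=.
rewrite (bigD1_seq (c `|` d)%fset) ?fset_uniq //=; last first.
  by move: cin din; rewrite !fpowersetE fsubUset => -> ->.
by rewrite eqxx big1 ?addr0 // => g; rewrite eq_sym => /negbTE ->.
Qed.

End MoebiusInversion.

Lemma exists_notin_fset (K : choiceType) (e : nat -> K) :
  injective e -> forall A : {fset K}, exists k, k \notin A.
Proof.
move=> inj_e A; pose B := [fset k in map e (iota 0 #|` A|.+1)]%fset.
suff /fsubsetPn[k _ kA] : ~~ (B `<=` A)%fset by exists k.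
apply/negP => /fsubset_leq_card.
by rewrite card_fseq undup_id ?size_map ?size_iota ?ltnn // map_inj_uniq ?iota_uniq.
Qed.

Section InducedUltrafilter.
Variables (K : choiceType) (R : realDomainType) (S : ({fset K} -> int) -> R).
Hypothesis HS : euclidean_sum S.
Notation I := {fset K}.

Definition Sf (g : I -> int) : R := S (moebius g).

Lemma S_fx_eq x y : (forall a, fx x a = fx y a) -> S x = S y.
Proof.
have [_ _ _ HCA _] := HS => E.
by apply/le_anti/andP; split; apply: HCA; exists fset0 => d _; rewrite E.
Qed.

Lemma Sf_fx x : Sf (fx x) = S x.
Proof. by apply: S_fx_eq => a; rewrite fx_moebius. Qed.

Lemma eq_Sf g h : (forall a, g a = h a) -> Sf g = Sf h.
Proof. by move=> E; apply: S_fx_eq => a; rewrite !fx_moebius. Qed.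

Lemma ler_Sf g h : (exists th : I, forall d, (th `<=` d)%fset -> g d <= h d) ->
  Sf g <= Sf h.
Proof.
have [_ _ _ HCA _] := HS => -[th Hth]; apply: HCA; exists th => d /Hth.
by rewrite !fx_moebius.
Qed.

Lemma ler_Sf_pointwise g h : (forall d, g d <= h d) -> Sf g <= Sf h.
Proof. by move=> gh; apply: ler_Sf; exists fset0. Qed.

Lemma SfD g h : Sf (fun d => g d + h d) = Sf g + Sf h.
Proof.
have [_ _ HLA _ _] := HS.
have := HLA 1 1 (moebius g) (moebius h); rewrite !mul1r /Sf => ->.
apply: S_fx_eq => a; rewrite fx_moebius /fx; under [RHS]eq_bigr do rewrite !mul1r.
by rewrite big_split /= -!/(fx _ _) !fx_moebius.
Qed.

Lemma SfM g h : Sf (fun d => g d * h d) = Sf g * Sf h.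
Proof.
have [_ _ _ _ HPA] := HS.
by rewrite /Sf HPA; apply: S_fx_eq => a; rewrite fxM !fx_moebius.
Qed.

Lemma Sf_onto r : exists g, Sf g = r.
Proof. by have [_ HRA _ _ _] := HS; have [x <-] := HRA r; exists (fx x); apply: Sf_fx. Qed.

Lemma Sf1 : Sf (fun _ => 1) = 1.
Proof.
have [g Sg1] := Sf_onto 1.
have := SfM (fun _ => 1) g; rewrite Sg1 mulr1 => <-.
by rewrite -Sg1; apply: eq_Sf => a; rewrite mul1r.
Qed.

Lemma Sf0 : Sf (fun _ => 0) = 0.
Proof.
apply: (addrI (Sf (fun _ => 0))); rewrite addr0 -SfD.
by apply: eq_Sf => a; rewrite addr0.
Qed.

Definition indicator (A : I -> Prop) (d : I) : int :=
  if excluded_middle_informative (A d) then 1 else 0.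

Definition Ufilter (A : I -> Prop) : Prop := Sf (indicator A) = 1.

Lemma Sf_indicator01 A : Sf (indicator A) = 0 \/ Sf (indicator A) = 1.
Proof.
have idem : Sf (indicator A) * (Sf (indicator A) - 1) == 0.
  rewrite mulrBr mulr1 -SfM subr_eq0; apply/eqP/eq_Sf => a.
  by rewrite /indicator; case: excluded_middle_informative.
by move: idem; rewrite mulf_eq0 subr_eq0 => /orP[] /eqP; [left|right].
Qed.

Lemma Ufilter_compl A : ~ Ufilter A -> Ufilter (fun t => ~ A t).
Proof.
move=> nUA; have [SA0|//] := Sf_indicator01 A.
rewrite /Ufilter -[Sf _]add0r -SA0 -SfD -Sf1; apply: eq_Sf => a.
by rewrite /indicator; do 2 case: excluded_middle_informative.
Qed.

Lemma Ufilter_indicatorM A g : Ufilter A -> Sf (fun d => indicator A d * g d) = Sf g.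
Proof. by move=> UA; rewrite SfM UA mul1r. Qed.

Lemma Ufilter_of_ge1 A : 1 <= Sf (indicator A) -> Ufilter A.
Proof. by have [->|//] := Sf_indicator01 A; rewrite ler10. Qed.

Lemma Ufilter_sub A B : (forall t, A t -> B t) -> Ufilter A -> Ufilter B.
Proof.
move=> AB UA; apply: Ufilter_of_ge1; rewrite -UA; apply: ler_Sf_pointwise => d.
rewrite /indicator; case: (excluded_middle_informative (B d)) => [Bd|nBd];
  case: (excluded_middle_informative (A d)) => //= Ad.
by case: nBd; apply: AB.
Qed.

Lemma Ufilter_and A B : Ufilter A -> Ufilter B -> Ufilter (fun t => A t /\ B t).
Proof.
move=> UA UB; rewrite /Ufilter -[1]mulr1 -{1}UA -UB -SfM; apply: eq_Sf => a.
rewrite /indicator; case: (excluded_middle_informative (A a)) => Aa;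
  case: (excluded_middle_informative (B a)) => Ba;
  by case: excluded_middle_informative => //= -[].
Qed.

Lemma Ufilter_is_ultrafilter : is_ultrafilter Ufilter.
Proof.
split.
- rewrite /Ufilter -Sf1; apply: eq_Sf => a.
  by rewrite /indicator; case: excluded_middle_informative.
- rewrite /Ufilter (@eq_Sf _ (fun _ => 0)) ?Sf0 => [/eqP|a].
    by rewrite eq_sym oner_eq0.
  by rewrite /indicator; case: excluded_middle_informative.
- exact: Ufilter_and.
- exact: Ufilter_sub.
- move=> A; case: (excluded_middle_informative (Ufilter A)); first by left.
  by right; apply: Ufilter_compl.
Qed.

(* Cones are eventual sets: every d containing th and a fresh k lies in cone th. *)
Lemma Ufilter_fine : (exists e : nat -> K, injective e) -> fine Ufilter.
Proof.
move=> [e inj_e] th; have [k kth] := exists_notin_fset inj_e th.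
apply: Ufilter_of_ge1; rewrite -Sf1; apply: ler_Sf; exists (k |` th)%fset => d kd.
rewrite /indicator; case: excluded_middle_informative => // -[].
rewrite /cone /fsqsub (fsubset_trans (fsubsetUr _ _) kd) /=.
apply/eqP => th_d; move: kd; rewrite -th_d => /fsubsetP /(_ k (fset1U1 _ _)).
by rewrite (negbTE kth).
Qed.

Lemma ler_Sf_Ufilter g h : Sf g <= Sf h <-> Ufilter (fun d => g d <= h d).
Proof.
split=> [le_gh|Ule]; last first.
  rewrite -(Ufilter_indicatorM g Ule) -(Ufilter_indicatorM h Ule).
  apply: ler_Sf_pointwise => d; rewrite /indicator.
  by case: excluded_middle_informative => ?; rewrite ?mul1r ?mul0r.
case: (excluded_middle_informative (Ufilter (fun d => g d <= h d))) => // nUle.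
have Ugt := Ufilter_compl nUle; exfalso.
have : Sf h + 1 <= Sf g.
  rewrite -Sf1 -SfD -(Ufilter_indicatorM _ Ugt) -(Ufilter_indicatorM g Ugt).
  apply: ler_Sf_pointwise => d; rewrite /indicator.
  case: excluded_middle_informative => ngh; rewrite ?mul1r ?mul0r //.
  by rewrite leNgt ltzD1; apply/negP.
by move/le_trans/(_ le_gh); rewrite gerDl ler10.
Qed.

Lemma eq_Sf_Ufilter g h : Sf g = Sf h <-> Ufilter (fun d => g d = h d).
Proof.
split=> [E|Ueq].
  apply: Ufilter_sub (Ufilter_and (proj1 (ler_Sf_Ufilter g h) _)
                                 (proj1 (ler_Sf_Ufilter h g) _)); rewrite ?E //.
  by move=> t [gh hg]; apply/le_anti/andP.
by apply/le_anti/andP; split; apply/ler_Sf_Ufilter; apply: Ufilter_sub Ueq => t ->.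
Qed.

Definition sigma (r : R) : I -> int :=
  proj1_sig (constructive_indefinite_description _ (Sf_onto r)).

Lemma Sf_sigma r : Sf (sigma r) = r.
Proof. by rewrite /sigma; case: constructive_indefinite_description. Qed.

Lemma sigma_ordered_ring_iso : ordered_ring_iso_ultrapower Ufilter sigma.
Proof.
split.
- by move=> r s; apply/eq_Sf_Ufilter; rewrite SfD !Sf_sigma.
- by move=> r s; apply/eq_Sf_Ufilter; rewrite SfM !Sf_sigma.
- by apply/eq_Sf_Ufilter; rewrite Sf1 Sf_sigma.
- split=> [r s /eq_Sf_Ufilter|g]; first by rewrite !Sf_sigma.
  by exists (Sf g); apply/eq_Sf_Ufilter; rewrite Sf_sigma.
- by move=> r s; rewrite /ule -ler_Sf_Ufilter !Sf_sigma.
Qed.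

End InducedUltrafilter.

Theorem theorem1p2 (K : choiceType)
    (Kinf : exists e : nat -> K, injective e)
    (R : realDomainType) (Rdisc : discretely_ordered R)
    (S : ({fset K} -> int) -> R) (HS : euclidean_sum S) :
  exists (U : ({fset K} -> Prop) -> Prop) (sigma : R -> {fset K} -> int),
    [/\ is_ultrafilter U, fine U,
        ordered_ring_iso_ultrapower U sigma,
        (forall x, ueq U (sigma (S x)) (fx x)) &
        (forall x y, S x <= S y <-> U (fun d => fx x d <= fx y d))].
Proof.
exists (Ufilter S), (sigma HS); split.
- exact: Ufilter_is_ultrafilter HS.
- exact: Ufilter_fine HS Kinf.
- exact: sigma_ordered_ring_iso HS.
- by move=> x; apply/(eq_Sf_Ufilter HS); rewrite Sf_sigma (Sf_fx HS).
- by move=> x y; rewrite -(ler_Sf_Ufilter HS) !(Sf_fx HS).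
Qed.
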